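(* Let $x_1\le x_2\le\cdots$ be a sequence and let $x_\ell$ be a target element. Suppose the search accesses the sequence only through comparisons with $x_\ell$, and each comparison independently gives the wrong answer with probability at most a fixed constant less than $1/2$. Then for every constant $Q<1/2$ one can find an index $r$ with $\ell\le r\le 2\ell$, with probability at least $1-Q$, using $O(\lg(\ell/Q))$ comparisons.
   Context: This is the noisy exponential search problem: the goal is to locate $x_\ell$ up to a factor-two overshoot, in the style of exponential search, when comparisons are unreliable. *)

From Stdlib Require Import Reals List Arith.
Open Scope R_scope.

(* A (deterministic, adaptive) search algorithm: given the list of answers
   received so far, it either asks a comparison of x_i with the target x_l
   ("is x_i < x_l ?"), or stops and outputs an index r. *)
Inductive step : Type := Query (i : nat) | Output (r : nat).
Definition strategy := list bool -> step.

(* True answer to the comparison "x_i < x_l", ties broken by position. *)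
Definition cmp_less (x : nat -> R) (l i : nat) : bool :=
  if Rlt_dec (x i) (x l) then true
  else if Req_EM_T (x i) (x l) then Nat.ltb i l else false.

(* The t-th
   comparison (t = length of history), on index i, is answered wrongly with
   probability q t i, independently of everything else. *)
Fixpoint success_prob (A : strategy) (x : nat -> R) (l : nat)
    (q : nat -> nat -> R) (good : nat -> bool) (n : nat) (h : list bool) : R :=
  match A h with
  | Output r => if good r then 1 else 0
  | Query i =>
      match n with
      | O => 0
      | S n' =>
          let b := cmp_less x l i in
          let e := q (length h) i in
          (1 - e) * success_prob A x l q good n' (h ++ b :: nil)
          + e * success_prob A x l q good n' (h ++ negb b :: nil)
      end
  end.

Definition lg (y : R) : R := ln y / ln 2.

(** Each virtual comparison is asked [2a+1] times and decided by majority; by a Chernoff bound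
    the majority is wrong with probability at most [1/256] for a suitable constant [a].  On the
    virtual answers the search moves along levels [j] (candidate outputs [2^j]) with a
    confidence counter [k] and stops once [k] reaches [S0 + j].  For the target level [js], the
    potential [2^psi], where [psi] is about [-4k] at level [js] and [4(k + |j - js|)]
    elsewhere, at least halves in expectation at every virtual step, while it is at least
    [16^-(S0+js)] as long as the search runs and at least [16^(S0+js)/4] at a wrong output.
    Hence after [n] virtual steps the failure probability is at most
    [2^(8 js + 4 S0 - n) + 16^-S0], and [S0 ~ lg(1/Q)], [js <= lg l + 1], [n = O(js + S0)]
    give the bound. *)

From Stdlib Require Import Reals List Lia Lra ZArith Bool.
Open Scope R_scope.

Lemma mix_le e X Y X' Y' : 0 <= e <= 1 -> X <= X' -> Y <= Y' ->
  (1 - e) * X + e * Y <= (1 - e) * X' + e * Y'.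
Proof. intros. nra. Qed.

Lemma success_prob_query A x l q good n h i : A h = Query i ->
  success_prob A x l q good (S n) h =
  (1 - q (length h) i) * success_prob A x l q good n (h ++ cmp_less x l i :: nil)
  + q (length h) i * success_prob A x l q good n (h ++ negb (cmp_less x l i) :: nil).
Proof. intros E. simpl. now rewrite E. Qed.

Lemma success_prob_output A x l q good n h r : A h = Output r ->
  success_prob A x l q good n h = if good r then 1 else 0.
Proof. intros E. destruct n; simpl; now rewrite E. Qed.

Lemma success_prob_nonneg A x l q good n h : (forall t i, 0 <= q t i <= 1) ->
  0 <= success_prob A x l q good n h.
Proof.
  intros Hq. revert h. induction n as [|n IH]; intros h; simpl;
    destruct (A h) as [i|r]; try (destruct (good r); lra); try lra.
  pose proof (mix_le (q (length h) i) 0 0 _ _ (Hq _ _)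
    (IH (h ++ cmp_less x l i :: nil)) (IH (h ++ negb (cmp_less x l i) :: nil))).
  lra.
Qed.

Section PotentialBound.

Variables (A : strategy) (x : nat -> R) (l : nat) (q : nat -> nat -> R) (good : nat -> bool).
Variables (Phi : list bool -> R) (alpha beta : R).
Hypothesis q_prob : forall t i, 0 <= q t i <= 1.
Hypothesis Phi_nonneg : forall h, 0 <= Phi h.
Hypotheses (alpha_nonneg : 0 <= alpha) (beta_nonneg : 0 <= beta).
Hypothesis Phi_halves : forall h i, A h = Query i ->
  (1 - q (length h) i) * Phi (h ++ cmp_less x l i :: nil)
  + q (length h) i * Phi (h ++ negb (cmp_less x l i) :: nil) <= Phi h / 2.
Hypothesis Phi_query : forall h i, A h = Query i -> 1 <= alpha * Phi h.
Hypothesis Phi_bad_output : forall h r, A h = Output r -> good r = false -> 1 <= beta * Phi h.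

Lemma failure_le_potential n h :
  1 - success_prob A x l q good n h <= ((/ 2) ^ n * alpha + beta) * Phi h.
Proof.
  assert (coef_nonneg : forall k, 0 <= (/ 2) ^ k * alpha)
    by (intros k; pose proof (pow_le (/ 2) k ltac:(lra)); nra).
  assert (output_case : forall k h' r, A h' = Output r ->
            1 - success_prob A x l q good k h' <= ((/ 2) ^ k * alpha + beta) * Phi h').
  { intros k h' r E. rewrite (success_prob_output _ _ _ _ _ _ _ r E).
    pose proof (Phi_nonneg h'). pose proof (coef_nonneg k).
    destruct (good r) eqn:G; [nra|]. pose proof (Phi_bad_output h' r E G). nra. }
  revert h. induction n as [|n IH]; intros h; destruct (A h) as [i|r] eqn:E;
    [| now apply (output_case _ _ r) | | now apply (output_case _ _ r)].
  - simpl. rewrite E. pose proof (Phi_query h i E). pose proof (Phi_nonneg h). nra.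
  - rewrite (success_prob_query _ _ _ _ _ _ _ i E).
    pose proof (Phi_halves h i E) as Hhalf.
    set (e := q (length h) i) in *.
    set (h1 := h ++ cmp_less x l i :: nil) in *.
    set (h2 := h ++ negb (cmp_less x l i) :: nil) in *.
    set (c := (/ 2) ^ n * alpha + beta) in *.
    pose proof (mix_le e _ _ _ _ (q_prob _ _) (IH h1) (IH h2)).
    assert (c * ((1 - e) * Phi h1 + e * Phi h2) <= c * (Phi h / 2))
      by (apply Rmult_le_compat_l; [pose proof (coef_nonneg n); unfold c; lra | exact Hhalf]).
    assert (0 <= beta * Phi h) by (pose proof (Phi_nonneg h); nra).
    assert (c * (Phi h / 2) = ((/ 2) ^ S n * alpha + beta) * Phi h - beta * Phi h / 2)
      by (unfold c; simpl; field).
    assert ((1 - e) * (c * Phi h1) + e * (c * Phi h2) = c * ((1 - e) * Phi h1 + e * Phi h2))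
      by ring.
    lra.
Qed.

End PotentialBound.

Lemma powerRZ2_pos z : 0 < powerRZ 2 z.
Proof. apply powerRZ_lt. lra. Qed.

Lemma powerRZ2_le m n : (m <= n)%Z -> powerRZ 2 m <= powerRZ 2 n.
Proof.
  intros H. rewrite !powerRZ_Rpower by lra.
  apply Rle_Rpower; [lra|]. now apply IZR_le.
Qed.

Lemma powerRZ2_add m n : powerRZ 2 (m + n) = powerRZ 2 m * powerRZ 2 n.
Proof. apply powerRZ_add. lra. Qed.

Lemma powerRZ2_mix_le_half e z z1 z2 : 0 <= e <= / 256 ->
  (z1 <= z - 2 /\ z2 <= z + 6 \/ z1 <= z - 1 /\ z2 <= z - 1)%Z ->
  (1 - e) * powerRZ 2 z1 + e * powerRZ 2 z2 <= powerRZ 2 z / 2.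
Proof.
  intros He Hz. pose proof (powerRZ2_pos z).
  destruct Hz as [[H1 H2] | [H1 H2]]; apply powerRZ2_le in H1, H2;
    unfold Z.sub in H1, H2; rewrite powerRZ2_add in H1, H2; simpl in H1, H2; nra.
Qed.

(* The search sits at level [j], i.e. at the candidate output [2^j], with confidence [k].  It
   alternately checks [2^(j-1) < l] (while [tests_level] is false; level 0 skips this check)
   and [l <= 2^j].  A round in which both checks pass raises [k]; a failed check lowers [k],
   or, when [k = 0], moves one level in the direction it indicates.  The argument [below] of
   [search_step] is the answer to "is the queried element below the target?". *)
Record search_state := SearchState { level : nat; confidence : nat; tests_level : bool }.

Definition enter (j k : nat) : search_state := SearchState j k (Nat.eqb j 0).

Definition query_exponent (s : search_state) : nat :=
  if tests_level s then level s else pred (level s).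

Definition search_step (s : search_state) (below : bool) : search_state :=
  let (j, k, ph) := s in
  if ph then
    if below then (if Nat.eqb k 0 then enter (S j) 0 else enter j (pred k))
    else enter j (S k)
  else
    if below then SearchState j k true
    else (if Nat.eqb k 0 then enter (pred j) 0 else enter j (pred k)).

Definition search_run (h : list bool) : search_state := fold_left search_step h (enter 0 0).

Definition virtual_search (S0 : nat) : strategy := fun h =>
  let s := search_run h in
  if Nat.leb (S0 + level s) (confidence s) then Output (2 ^ level s)
  else Query (2 ^ query_exponent s).

Definition state_ok (s : search_state) : Prop := tests_level s = false -> level s <> 0%nat.

Lemma search_run_app h c : search_run (h ++ c :: nil) = search_step (search_run h) c.
Proof. unfold search_run. now rewrite fold_left_app. Qed.

Lemma search_run_state_ok h : state_ok (search_run h).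
Proof.
  assert (enter_ok : forall j k, state_ok (enter j k)).
  { intros j k. unfold state_ok, enter; simpl. destruct (Nat.eqb_spec j 0); congruence. }
  induction h as [|c h IH] using rev_ind; [apply enter_ok|].
  rewrite search_run_app. destruct (search_run h) as [j k []], c; simpl;
    repeat match goal with |- context [if ?b then _ else _] => destruct b end;
    auto; discriminate.
Qed.

Definition log_potential (js : nat) (s : search_state) : Z :=
  let (j, k, ph) := s in
  4 * (if Nat.eqb j js then - Z.of_nat k else Z.of_nat k + Z.abs (Z.of_nat j - Z.of_nat js))
  + (if ph then (if Nat.leb j js then -2 else 5) else 0).

Ltac case_nat_tests :=
  repeat match goal with
  | |- context [Nat.eqb ?a ?b] => destruct (Nat.eqb_spec a b)
  | |- context [Nat.leb ?a ?b] => destruct (Nat.leb_spec a b)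
  | |- context [Nat.ltb ?a ?b] => destruct (Nat.ltb_spec a b)
  end.

Lemma log_potential_drift js s : state_ok s ->
  let z := log_potential js s in
  let z_right := log_potential js (search_step s (Nat.ltb (query_exponent s) js)) in
  let z_wrong := log_potential js (search_step s (negb (Nat.ltb (query_exponent s) js))) in
  (z_right <= z - 2 /\ z_wrong <= z + 6 \/ z_right <= z - 1 /\ z_wrong <= z - 1)%Z.
Proof.
  destruct s as [j k []]; unfold state_ok; intros Hok;
    cbn [search_step log_potential enter query_exponent level confidence tests_level negb] in *;
    case_nat_tests;
    cbn [search_step log_potential enter query_exponent level confidence tests_level negb];
    case_nat_tests; lia.
Qed.

Lemma log_potential_not_stopped js S0 s : (confidence s < S0 + level s)%nat ->
  (- 4 * Z.of_nat (S0 + js) <= log_potential js s)%Z.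
Proof.
  destruct s as [j k ph]; cbn [log_potential level confidence]; intros H.
  destruct ph; case_nat_tests; lia.
Qed.

Lemma log_potential_wrong_output js S0 s : (S0 + level s <= confidence s)%nat ->
  level s <> js -> (4 * Z.of_nat (S0 + js) - 2 <= log_potential js s)%Z.
Proof.
  destruct s as [j k ph]; cbn [log_potential level confidence]; intros H Hj.
  destruct ph; case_nat_tests; lia.
Qed.

Lemma log_potential_start js : log_potential js (enter 0 0) = (4 * Z.of_nat js - 2)%Z.
Proof. unfold log_potential, enter. case_nat_tests; lia. Qed.

Section VirtualSearch.

Variables (x : nat -> R) (l js : nat) (q : nat -> nat -> R) (good : nat -> bool).
Hypothesis answers : forall e, cmp_less x l (2 ^ e) = Nat.ltb e js.
Hypothesis good_target : good (2 ^ js) = true.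
Hypothesis q_small : forall t i, 0 <= q t i <= / 256.

Lemma virtual_search_failure S0 n :
  1 - success_prob (virtual_search S0) x l q good n nil
  <= powerRZ 2 (8 * Z.of_nat js + 4 * Z.of_nat S0 - 2 - Z.of_nat n)
     + powerRZ 2 (- 4 * Z.of_nat S0).
Proof.
  set (T := Z.of_nat (S0 + js)).
  set (Phi := fun h => powerRZ 2 (log_potential js (search_run h))).
  enough (Hfail : 1 - success_prob (virtual_search S0) x l q good n nil
                  <= ((/ 2) ^ n * powerRZ 2 (4 * T) + powerRZ 2 (2 - 4 * T)) * Phi nil).
  { unfold Phi in Hfail; cbn [search_run fold_left] in Hfail.
    rewrite log_potential_start, pow_inv, pow_powerRZ, <- powerRZ_neg' in Hfail.
    replace (8 * Z.of_nat js + 4 * Z.of_nat S0 - 2 - Z.of_nat n)%Z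
      with (- Z.of_nat n + 4 * T + (4 * Z.of_nat js - 2))%Z by (unfold T; lia).
    replace (- 4 * Z.of_nat S0)%Z with (2 - 4 * T + (4 * Z.of_nat js - 2))%Z by (unfold T; lia).
    rewrite !powerRZ2_add. lra. }
  apply failure_le_potential.
  - intros t i; specialize (q_small t i); lra.
  - intros h; apply Rlt_le, powerRZ2_pos.
  - apply Rlt_le, powerRZ2_pos.
  - apply Rlt_le, powerRZ2_pos.
  - intros h i. unfold virtual_search, Phi. rewrite !search_run_app.
    destruct (Nat.leb _ _); intros E; [discriminate|]. injection E as <-.
    rewrite answers. apply powerRZ2_mix_le_half; [apply q_small|].
    apply log_potential_drift, search_run_state_ok.
  - intros h i. unfold virtual_search, Phi.
    destruct (Nat.leb_spec (S0 + level (search_run h)) (confidence (search_run h)))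
      as [_|Hrun]; intros E; [discriminate|].
    rewrite <- powerRZ2_add, <- (powerRZ_O 2). apply powerRZ2_le.
    pose proof (log_potential_not_stopped js S0 _ Hrun). unfold T. lia.
  - intros h r. unfold virtual_search, Phi.
    destruct (Nat.leb_spec (S0 + level (search_run h)) (confidence (search_run h)))
      as [Hstop|_]; intros E; [|discriminate]. injection E as <-. intros Hbad.
    assert (Hj : level (search_run h) <> js)
      by (intros Hj; rewrite Hj, good_target in Hbad; discriminate).
    rewrite <- powerRZ2_add, <- (powerRZ_O 2). apply powerRZ2_le.
    pose proof (log_potential_wrong_output js S0 _ Hstop Hj). unfold T. lia.
Qed.

End VirtualSearch.

Section BlockExpectation.

Variables (e : nat -> R) (b : bool).
Hypothesis e_prob : forall s, 0 <= e s <= 1.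

(* The [s]-th answer of a block to a comparison with true answer [b] is wrong with
   probability [e s]; [u] is the part of the block already answered. *)
Fixpoint block_exp (u : list bool) (r : nat) (F : list bool -> R) : R :=
  match r with
  | O => F u
  | S r' => (1 - e (length u)) * block_exp (u ++ b :: nil) r' F
            + e (length u) * block_exp (u ++ negb b :: nil) r' F
  end.

Lemma block_exp_scale r : forall u c F,
  block_exp u r (fun w => c * F w) = c * block_exp u r F.
Proof. induction r as [|r IH]; intros; simpl; [reflexivity|]. rewrite !IH. ring. Qed.

Lemma block_exp_decide r : forall u (d : list bool -> bool) (f : bool -> R),
  block_exp u r (fun w => f (d w))
  = f b + (f (negb b) - f b) * block_exp u r (fun w => if Bool.eqb (d w) b then 0 else 1).
Proof.
  induction r as [|r IH]; intros u d f; simpl.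
  - destruct (d u), b; simpl; ring.
  - rewrite !IH. ring.
Qed.

Lemma block_exp_mono r : forall u F F',
  (forall w, length w = (length u + r)%nat -> F w <= F' w) ->
  block_exp u r F <= block_exp u r F'.
Proof.
  induction r as [|r IH]; intros u F F' H; simpl.
  - apply H. lia.
  - apply mix_le; [apply e_prob| |]; apply IH; intros w Hw; apply H;
      rewrite Hw, length_app; simpl; lia.
Qed.

Lemma block_exp_nonneg r u F : (forall w, 0 <= F w) -> 0 <= block_exp u r F.
Proof.
  intros H. revert u. induction r as [|r IH]; intros u; simpl; [apply H|].
  pose proof (mix_le (e (length u)) 0 0 _ _ (e_prob _)
    (IH (u ++ b :: nil)) (IH (u ++ negb b :: nil))).
  lra.
Qed.

Definition wrong_count (w : list bool) : nat := count_occ bool_dec w (negb b).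

Lemma block_exp_chernoff P z r u : (forall s, e s <= P) -> 1 <= z ->
  block_exp u r (fun w => z ^ wrong_count w) <= z ^ wrong_count u * (1 - P + P * z) ^ r.
Proof.
  intros HP Hz. revert u. induction r as [|r IH]; intros u; simpl; [lra|].
  assert (right_answer : wrong_count (u ++ b :: nil) = wrong_count u)
    by (unfold wrong_count; rewrite count_occ_app; destruct b; simpl; lia).
  assert (wrong_answer : wrong_count (u ++ negb b :: nil) = S (wrong_count u))
    by (unfold wrong_count; rewrite count_occ_app; destruct b; simpl; lia).
  pose proof (IH (u ++ b :: nil)) as I1. pose proof (IH (u ++ negb b :: nil)) as I2.
  rewrite right_answer in I1. rewrite wrong_answer in I2. simpl pow in I2.
  pose proof (e_prob (length u)). pose proof (HP (length u)).
  set (Z := z ^ wrong_count u) in *. set (K := (1 - P + P * z) ^ r) in *.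
  assert (0 <= Z) by (apply pow_le; lra).
  assert (0 <= K) by (apply pow_le; nra).
  pose proof (mix_le (e (length u)) _ _ _ _ (e_prob _) I1 I2).
  assert (e (length u) * (z - 1) * (Z * K) <= P * (z - 1) * (Z * K))
    by (apply Rmult_le_compat_r; [nra|]; apply Rmult_le_compat_r; lra).
  nra.
Qed.

End BlockExpectation.

Section Amplification.

Variables (m : nat) (decide : list bool -> bool).
Hypothesis m_pos : (0 < m)%nat.

Record block_state := BlockState { virtual_history : list bool; pending : list bool }.

Definition block_step (s : block_state) (c : bool) : block_state :=
  let u := pending s ++ c :: nil in
  if Nat.eqb (length u) m then BlockState (virtual_history s ++ decide u :: nil) nil
  else BlockState (virtual_history s) u.

Definition block_run (h : list bool) : block_state :=
  fold_left block_step h (BlockState nil nil).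

Definition amplify (V0 : strategy) : strategy := fun h => V0 (virtual_history (block_run h)).

Lemma block_run_app h c : block_run (h ++ c :: nil) = block_step (block_run h) c.
Proof. unfold block_run. now rewrite fold_left_app. Qed.

Lemma block_run_length h :
  length h = (m * length (virtual_history (block_run h)) + length (pending (block_run h)))%nat.
Proof.
  induction h as [|c h IH] using rev_ind; [simpl; lia|].
  rewrite block_run_app. unfold block_step.
  destruct (Nat.eqb_spec (length (pending (block_run h) ++ c :: nil)) m);
    simpl; rewrite !length_app in *; simpl in *; lia.
Qed.

Lemma block_run_pending H vh u : block_run H = BlockState vh nil -> (length u < m)%nat ->
  block_run (H ++ u) = BlockState vh u.
Proof.
  intros HB. induction u as [|c u IH] using rev_ind; intros Hu.
  - now rewrite app_nil_r.
  - rewrite length_app in Hu. simpl in Hu.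
    rewrite app_assoc, block_run_app, IH by lia. unfold block_step. simpl.
    rewrite (proj2 (Nat.eqb_neq _ _)); [reflexivity|]. rewrite length_app. simpl. lia.
Qed.

Lemma block_run_complete H vh u : block_run H = BlockState vh nil -> length u = m ->
  block_run (H ++ u) = BlockState (vh ++ decide u :: nil) nil.
Proof.
  intros HB Hu. destruct u as [|c u] using rev_ind; [simpl in Hu; lia|].
  rewrite length_app in Hu. simpl in Hu.
  rewrite app_assoc, block_run_app, (block_run_pending H vh u HB) by lia.
  unfold block_step. simpl.
  now rewrite (proj2 (Nat.eqb_eq _ _)) by (rewrite length_app; simpl; lia).
Qed.

Definition block_error (e : nat -> R) (b : bool) : R :=
  block_exp e b nil m (fun w => if Bool.eqb (decide w) b then 0 else 1).

Variables (x : nat -> R) (l : nat) (q : nat -> nat -> R) (good : nat -> bool) (V0 : strategy).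
Hypothesis q_prob : forall t i, 0 <= q t i <= 1.

(* Virtual step [t] is answered by the real comparisons at times [m t], ..., [m t + m - 1]. *)
Definition virtual_noise (t i : nat) : R :=
  block_error (fun s => q (m * t + s) i) (cmp_less x l i).

Section OneBlock.

Variables (n : nat) (H vh : list bool) (i : nat).
Hypothesis at_boundary : block_run H = BlockState vh nil.
Hypothesis queries_i : V0 vh = Query i.
Hypothesis simulation_n : forall H' vh', block_run H' = BlockState vh' nil ->
  success_prob V0 x l virtual_noise good n vh'
  <= success_prob (amplify V0) x l q good (m * n) H'.

Lemma block_simulation r : forall u, (length u + r = m)%nat ->
  block_exp (fun s => q (length H + s) i) (cmp_less x l i) u r
    (fun w => success_prob V0 x l virtual_noise good n (vh ++ decide w :: nil))
  <= success_prob (amplify V0) x l q good (r + m * n) (H ++ u).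
Proof.
  induction r as [|r IH]; intros u Hu; cbn [block_exp Nat.add].
  - apply simulation_n, block_run_complete; [assumption | lia].
  - assert (E : amplify V0 (H ++ u) = Query i)
      by (unfold amplify; rewrite (block_run_pending H vh u) by (auto; lia); exact queries_i).
    rewrite (success_prob_query _ _ _ _ _ _ _ _ E), length_app, <- !app_assoc.
    apply mix_le; [apply q_prob| |]; apply IH; rewrite length_app; simpl; lia.
Qed.

End OneBlock.

Lemma amplify_simulation n : forall H vh, block_run H = BlockState vh nil ->
  success_prob V0 x l virtual_noise good n vh
  <= success_prob (amplify V0) x l q good (m * n) H.
Proof.
  induction n as [|n IH]; intros H vh HB;
    assert (EA : amplify V0 H = V0 vh) by (unfold amplify; now rewrite HB);
    destruct (V0 vh) as [i|r] eqn:EV;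
    try now rewrite (success_prob_output _ _ _ _ _ _ _ r EV),
                    (success_prob_output _ _ _ _ _ _ _ r EA).
  - simpl. rewrite EV. now apply success_prob_nonneg.
  - rewrite (success_prob_query _ _ _ _ _ _ _ _ EV).
    replace (m * S n)%nat with (m + m * n)%nat by lia.
    pose proof (block_simulation n H vh i HB EV IH m nil ltac:(simpl; lia)) as Hblock.
    rewrite app_nil_r, (block_exp_decide _ _ m nil decide
      (fun c => success_prob V0 x l virtual_noise good n (vh ++ c :: nil))) in Hblock.
    assert (Etime : length H = (m * length vh)%nat)
      by (rewrite block_run_length, HB; simpl; lia).
    replace (virtual_noise (length vh) i)
      with (block_error (fun s => q (length H + s) i) (cmp_less x l i))
      by (unfold virtual_noise; now rewrite Etime).
    unfold block_error. lra.
Qed.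

End Amplification.

Definition majority (a : nat) (w : list bool) : bool := Nat.ltb a (count_occ bool_dec w true).

Lemma majority_wrong_count a b w : length w = (2 * a + 1)%nat -> majority a w <> b ->
  (a + 1 <= wrong_count b w)%nat.
Proof.
  assert (Hsplit : forall v, (count_occ bool_dec v true + count_occ bool_dec v false = length v)%nat)
    by (induction v as [|[] v IH]; simpl; lia).
  intros Hw Hmaj. unfold majority, wrong_count in *. specialize (Hsplit w).
  destruct b, (Nat.ltb_spec a (count_occ bool_dec w true)); simpl; congruence || lia.
Qed.

Lemma chernoff_majority_algebra P a : 0 < P < 1 ->
  / ((1 - P) / P) ^ (a + 1) * (2 * (1 - P)) ^ (2 * a + 1) = 2 * P * (4 * P * (1 - P)) ^ a.
Proof.
  intros HP. replace (2 * a + 1)%nat with (a + (a + 1))%nat by lia.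
  replace 4 with (2 * 2) by ring.
  unfold Rdiv. rewrite !Rpow_mult_distr, pow_inv, !pow_add. simpl pow.
  assert (P ^ a <> 0) by (apply pow_nonzero; lra).
  assert ((1 - P) ^ a <> 0) by (apply pow_nonzero; lra).
  field. lra.
Qed.

Lemma majority_error_le a e b P : (forall s, 0 <= e s <= P) -> 0 < P <= / 2 ->
  block_error (2 * a + 1) (majority a) e b <= 2 * P * (4 * P * (1 - P)) ^ a.
Proof.
  intros He HP. set (z := (1 - P) / P).
  assert (Hz : 1 <= z) by (unfold z; apply (Rmult_le_reg_r P); [lra|]; field_simplify; lra).
  assert (Hza : 0 < z ^ (a + 1)) by (apply pow_lt; lra).
  assert (e_prob : forall s, 0 <= e s <= 1) by (intros s; specialize (He s); lra).
  unfold block_error. eapply Rle_trans.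
  - (* Markov's inequality for [z ^ wrong_count] *)
    apply (block_exp_mono e b e_prob _ nil _ (fun w => / z ^ (a + 1) * z ^ wrong_count b w)).
    intros w Hw. simpl in Hw.
    destruct (Bool.eqb_spec (majority a w) b) as [_|Hwrong].
    + apply Rmult_le_pos; [apply Rlt_le, Rinv_0_lt_compat, Hza | apply pow_le; lra].
    + apply (Rmult_le_reg_l (z ^ (a + 1))); [exact Hza|].
      rewrite <- Rmult_assoc, Rinv_r, Rmult_1_l, Rmult_1_r by lra.
      apply Rle_pow; [exact Hz | now apply majority_wrong_count].
  - rewrite block_exp_scale. eapply Rle_trans.
    + apply Rmult_le_compat_l; [apply Rlt_le, Rinv_0_lt_compat, Hza|].
      apply (block_exp_chernoff e b e_prob P); [intros s; apply He | exact Hz].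
    + replace (1 - P + P * z) with (2 * (1 - P)) by (unfold z; field; lra).
      change (wrong_count b nil) with 0%nat.
      rewrite pow_O, Rmult_1_l, <- chernoff_majority_algebra by lra. apply Rle_refl.
Qed.

Lemma majority_error_small p : 0 <= p < / 2 ->
  exists a, forall e b, (forall s, 0 <= e s <= p) ->
    0 <= block_error (2 * a + 1) (majority a) e b <= / 256.
Proof.
  intros Hp. set (P := (p + / 2) / 2).
  assert (HP : / 4 <= P < / 2 /\ p <= P) by (unfold P; lra). clearbody P.
  destruct (pow_lt_1_zero (4 * P * (1 - P)) ltac:(rewrite Rabs_right; nra) (/ 256))
    as [a Ha]; [lra|].
  specialize (Ha a (le_n a)).
  assert (Ha0 : 0 <= (4 * P * (1 - P)) ^ a) by (apply pow_le; nra).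
  rewrite Rabs_right in Ha by lra.
  exists a. intros e b He. split.
  - apply block_exp_nonneg; [intros s; specialize (He s); lra|].
    intros w; destruct (Bool.eqb _ _); lra.
  - eapply Rle_trans; [apply (majority_error_le a e b P); [intros s; specialize (He s)|]; lra|].
    assert (2 * P * (4 * P * (1 - P)) ^ a <= 1 * (4 * P * (1 - P)) ^ a)
      by (apply Rmult_le_compat_r; lra).
    lra.
Qed.

Lemma cmp_less_sorted x l i : (forall i j : nat, (1 <= i <= j)%nat -> x i <= x j) ->
  (1 <= l)%nat -> (1 <= i)%nat -> cmp_less x l i = Nat.ltb i l.
Proof.
  intros Hx Hl Hi. unfold cmp_less.
  destruct (Rlt_dec (x i) (x l)) as [H|H].
  - destruct (Nat.ltb_spec i l); auto. pose proof (Hx l i ltac:(lia)). lra.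
  - destruct (Req_EM_T (x i) (x l)); auto.
    destruct (Nat.ltb_spec i l); auto. pose proof (Hx i l ltac:(lia)). lra.
Qed.

Lemma cmp_less_pow2 x l e : (forall i j : nat, (1 <= i <= j)%nat -> x i <= x j) ->
  (1 <= l)%nat -> cmp_less x l (2 ^ e) = Nat.ltb e (Nat.log2_up l).
Proof.
  intros Hx Hl. pose proof (Nat.pow_nonzero 2 e ltac:(lia)).
  rewrite cmp_less_sorted by (auto; lia).
  pose proof (Nat.log2_up_le_pow2 l e ltac:(lia)) as E.
  destruct (Nat.ltb_spec (2 ^ e) l) as [Hlt|Hge], (Nat.ltb_spec e (Nat.log2_up l)) as [Hlt'|Hge'];
    auto; exfalso; [apply E in Hge' | apply E in Hge]; lia.
Qed.

Lemma pow2_log2_up_within l : (1 <= l)%nat ->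
  andb (Nat.leb l (2 ^ Nat.log2_up l)) (Nat.leb (2 ^ Nat.log2_up l) (2 * l)) = true.
Proof.
  intros Hl. apply andb_true_intro. rewrite !Nat.leb_le.
  destruct (Nat.eq_dec l 1) as [->|Hl1]; [simpl; lia|].
  destruct (Nat.log2_up_spec l ltac:(lia)) as [Hlow Hup].
  destruct (Nat.log2_up l) as [|js]; simpl in *; lia.
Qed.

Lemma ln2_pos : 0 < ln 2.
Proof. rewrite <- ln_1. apply ln_increasing; lra. Qed.

Lemma lg_pow2 n : lg (2 ^ n) = INR n.
Proof. unfold lg. rewrite ln_pow by lra. field. apply Rgt_not_eq, ln2_pos. Qed.

Lemma lg_lt a b : 0 < a -> a < b -> lg a < lg b.
Proof.
  intros Ha Hab. unfold lg, Rdiv. apply Rmult_lt_compat_r.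
  - apply Rinv_0_lt_compat, ln2_pos.
  - now apply ln_increasing.
Qed.

Lemma lg_mult a b : 0 < a -> 0 < b -> lg (a * b) = lg a + lg b.
Proof. intros Ha Hb. unfold lg. rewrite ln_mult by assumption. field. apply Rgt_not_eq, ln2_pos. Qed.

Lemma lg_ge_pow2 n y : 2 ^ n <= y -> INR n <= lg y.
Proof.
  intros H. rewrite <- lg_pow2. destruct (Req_dec (2 ^ n) y) as [<-|Hne]; [lra|].
  left. apply lg_lt; [apply pow_lt; lra | lra].
Qed.

Lemma log2_up_le_lg l : (1 <= l)%nat -> INR (Nat.log2_up l) <= lg (INR l) + 1.
Proof.
  intros Hl. destruct (Nat.eq_dec l 1) as [->|Hl1].
  - rewrite Nat.log2_up_1. pose proof (lg_ge_pow2 0 (INR 1)). simpl in *. lra.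
  - destruct (Nat.log2_up_spec l ltac:(lia)) as [Hlow _].
    assert (Hlg : INR (Nat.pred (Nat.log2_up l)) <= lg (INR l)).
    { apply lg_ge_pow2. replace 2 with (INR 2) by (simpl; ring).
      rewrite <- pow_INR. apply le_INR. lia. }
    rewrite <- (Nat.succ_pred_pos (Nat.log2_up l)) by (apply Nat.log2_up_pos; lia).
    rewrite S_INR. lra.
Qed.

Lemma pow2_above y : 1 <= y -> exists K : nat, y <= 2 ^ K /\ INR K <= lg y + 1.
Proof.
  intros Hy. destruct (archimed (lg y)) as [Hup1 Hup2].
  assert (Hlg : 0 <= lg y) by (apply (lg_ge_pow2 0); simpl; lra).
  assert (Hz : (0 <= up (lg y))%Z) by (apply le_IZR; lra).
  exists (Z.to_nat (up (lg y))).
  assert (EK : INR (Z.to_nat (up (lg y))) = IZR (up (lg y)))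
    by (rewrite INR_IZR_INZ, Z2Nat.id; auto).
  split; [|lra].
  destruct (Rle_lt_dec y (2 ^ Z.to_nat (up (lg y)))) as [H|H]; [exact H|].
  apply lg_lt in H; [|apply pow_lt; lra]. rewrite lg_pow2 in H. lra.
Qed.

Lemma comparison_count_le a js K l Q : 0 < Q < / 2 -> (1 <= l)%nat ->
  INR js <= lg (INR l) + 1 -> INR K <= lg (/ Q) + 1 ->
  INR ((2 * a + 1) * (8 * js + 5 * K)) <= 18 * INR (2 * a + 1) * lg (INR l / Q).
Proof.
  intros HQ Hl Hjs HK.
  assert (Hl_lg : 0 <= lg (INR l)) by (apply (lg_ge_pow2 0); simpl; apply (le_INR 1); lia).
  assert (HQ_lg : 1 <= lg (/ Q)).
  { apply (lg_ge_pow2 1). rewrite pow_1, <- (Rinv_inv 2).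
    apply Rinv_le_contravar; lra. }
  unfold Rdiv. rewrite lg_mult by (try apply Rinv_0_lt_compat; try apply (lt_INR 0); lia || lra).
  rewrite mult_INR, (Rmult_comm 18), Rmult_assoc. apply Rmult_le_compat_l; [apply pos_INR|].
  rewrite plus_INR, !mult_INR. simpl INR. lra.
Qed.

Lemma powerRZ2_tail_le K Q : 0 < Q < / 2 -> / Q <= 2 ^ K ->
  powerRZ 2 (- Z.of_nat K - 2) + powerRZ 2 (- 4 * Z.of_nat K) <= Q.
Proof.
  intros HQ HQK.
  assert (HK : (1 <= K)%nat).
  { destruct K; [|lia]. assert (2 < / Q) by (rewrite <- (Rinv_inv 2); apply Rinv_lt_contravar; nra).
    simpl in HQK. lra. }
  assert (powerRZ 2 (- 4 * Z.of_nat K) <= powerRZ 2 (- Z.of_nat K - 2)) by (apply powerRZ2_le; lia).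
  assert (powerRZ 2 (- Z.of_nat K) = 4 * powerRZ 2 (- Z.of_nat K - 2)).
  { replace (- Z.of_nat K)%Z with (- Z.of_nat K - 2 + 2)%Z at 1 by lia.
    rewrite powerRZ2_add. simpl. ring. }
  assert (powerRZ 2 (- Z.of_nat K) <= Q).
  { rewrite powerRZ_neg', <- pow_powerRZ, <- (Rinv_inv Q).
    apply Rinv_le_contravar; [apply Rinv_0_lt_compat; lra | exact HQK]. }
  pose proof (powerRZ2_pos (- Z.of_nat K - 2)). lra.
Qed.

Theorem lemma3 :
  forall p : R, 0 <= p < 1/2 ->
  exists C : R,
  forall Q : R, 0 < Q < 1/2 ->
  exists A : strategy,
  forall x : nat -> R, (forall i j : nat, (1 <= i <= j)%nat -> x i <= x j) ->
  forall l : nat, (1 <= l)%nat ->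
  forall q : nat -> nat -> R, (forall t i : nat, 0 <= q t i <= p) ->
  exists n : nat,
    INR n <= C * lg (INR l / Q) /\
    success_prob A x l q (fun r => andb (Nat.leb l r) (Nat.leb r (2 * l))) n nil >= 1 - Q.
Proof.
  intros p Hp. destruct (majority_error_small p ltac:(lra)) as [a Hmaj].
  exists (18 * INR (2 * a + 1)). intros Q HQ.
  destruct (pow2_above (/ Q)) as (K & HQK & HKlg);
    [rewrite <- Rinv_1; apply Rinv_le_contravar; lra|].
  exists (amplify (2 * a + 1) (majority a) (virtual_search K)).
  intros x Hx l Hl q Hq. set (js := Nat.log2_up l).
  set (good := fun r => andb (Nat.leb l r) (Nat.leb r (2 * l))).
  exists ((2 * a + 1) * (8 * js + 5 * K))%nat. split.
  { apply comparison_count_le; [lra | exact Hl | apply log2_up_le_lg, Hl | exact HKlg]. }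
  pose proof (amplify_simulation (2 * a + 1) (majority a) ltac:(lia) x l q good (virtual_search K)
    ltac:(intros t i; specialize (Hq t i); lra) (8 * js + 5 * K) nil nil eq_refl) as Hsim.
  assert (noise_small : forall t i, 0 <= virtual_noise (2 * a + 1) (majority a) x l q t i <= / 256)
    by (intros t i; apply Hmaj; intros s; apply Hq).
  pose proof (virtual_search_failure x l js _ good (fun e => cmp_less_pow2 x l e Hx Hl)
    (pow2_log2_up_within l Hl) noise_small K (8 * js + 5 * K)) as Hfail.
  replace (8 * Z.of_nat js + 4 * Z.of_nat K - 2 - Z.of_nat (8 * js + 5 * K))%Z
    with (- Z.of_nat K - 2)%Z in Hfail by lia.
  pose proof (powerRZ2_tail_le K Q ltac:(lra) HQK). lra.
Qed.
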